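(* For each $k > 0$ there is a comonad in Kleisli form $(\mathbb{H}_{k}, \varepsilon, (\cdot)^* )$ on $\mathsf{HGraph}$, given by restricting focussed plays to hyperedges of size at most $k$.
   Context: $\mathsf{HGraph}$ is the category of hypergraphs $(V,E)$ ($E$ a family of finite subsets of $V$) and maps sending hyperedges to hyperedges. The hypergraph comonad $\mathbb{H}$: vertices of $\mathbb{H}(V,E)$ are equivalence classes $[p,a]$ of focussed plays $\langle p,a\rangle$ ($p=[U_1,\ldots,U_n]$ a non-empty list of hyperedges, $a\in U_n$), where $\langle p,a\rangle\sim\langle q,a'\rangle$ iff $a=a'$, $p\sqcap q$ non-empty, and $a$ lies in the last hyperedge of every play on the prefix-order paths from $p\sqcap q$ to $p$ and $q$; hyperedges are $\{[p,a]\mid a\in U\}$ with $U\in E$ the last element of $p$. Counit $\varepsilon([p,a])=a$; coextension $h^*([[U_1,\ldots,U_n],a])=[[V_1,\ldots,V_n],h([[U_1,\ldots,U_n],a])]$ with $V_j=\{h([[U_1,\ldots,U_j],b])\mid b\in U_j\}$. *)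

From Stdlib Require Import List Arith ClassicalEpsilon.
Import ListNotations.


(* A hypergraph (V,E): a vertex type and a family E of subsets of V
   (subsets are predicates; with functional/propositional extensionality
   extensional equality of subsets is Leibniz equality).
   Finiteness of hyperedges is the separate predicate [finite_edges]. *)
Record hgraph := HGraph { hV : Type ; hE : (hV -> Prop) -> Prop }.

Definition finite_subset {V : Type} (U : V -> Prop) : Prop :=
  exists l : list V, forall x, U x <-> In x l.

Definition atmost {V : Type} (k : nat) (U : V -> Prop) : Prop :=
  exists l : list V, length l <= k /\ forall x, U x <-> In x l.

Definition finite_edges (G : hgraph) : Prop :=
  forall U, hE G U -> finite_subset U.

Definition image {A B : Type} (f : A -> B) (U : A -> Prop) : B -> Prop :=
  fun y => exists x, U x /\ f x = y.

Definition is_hom (G H : hgraph) (f : hV G -> hV H) : Prop :=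
  forall U, hE G U -> hE H (image f U).

Section Plays.
Variable G : hgraph.

Definition play : Type := (list (hV G -> Prop) * hV G)%type.

Definition dE : hV G -> Prop := fun _ => False.

Definition valid_list (k : nat) (p : list (hV G -> Prop)) : Prop :=
  p <> [] /\ forall U, In U p -> hE G U /\ atmost k U.

Definition valid_play (k : nat) (x : play) : Prop :=
  valid_list k (fst x) /\ last (fst x) dE (snd x).

(* <p,a> ~ <q,a'>: a = a', p ⊓ q (longest common prefix, of length m) is
   non-empty, and a lies in the last hyperedge of every prefix r of p
   (resp. q) with p ⊓ q <= r, i.e. in the hyperedges at (0-based) indices
   m-1, ..., length-1. *)
Definition feq (x y : play) : Prop :=
  let (p, a) := x in let (q, a') := y in
  a = a' /\
  exists m : nat,
    1 <= m /\ m <= length p /\ m <= length q /\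
    firstn m p = firstn m q /\
    (m = length p \/ m = length q \/ nth m p dE <> nth m q dE) /\
    (forall j, m - 1 <= j < length p -> nth j p dE a) /\
    (forall j, m - 1 <= j < length q -> nth j q dE a).

Definition cls (k : nat) (x : play) : play -> Prop :=
  fun y => valid_play k y /\ feq x y.

Definition Hvert (k : nat) : Type :=
  { C : play -> Prop | exists x, valid_play k x /\ C = cls k x }.

Definition mkv (k : nat) (x : play) (Hx : valid_play k x) : Hvert k :=
  exist _ (cls k x) (ex_intro _ x (conj Hx eq_refl)).

Definition Hedge (k : nat) (S : Hvert k -> Prop) : Prop :=
  exists p, valid_list k p /\
    S = (fun v => exists a, last p dE a /\ proj1_sig v = cls k (p, a)).

End Plays.

Definition Hk (k : nat) (G : hgraph) : hgraph :=
  @HGraph (Hvert G k) (@Hedge G k).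

Definition vrepr (k : nat) (G : hgraph) (v : hV (Hk k G)) : play G :=
  proj1_sig (constructive_indefinite_description _ (proj2_sig v)).

Definition eps (k : nat) (G : hgraph) (v : hV (Hk k G)) : hV G :=
  snd (vrepr k G v).

(** Coextension on a representative:
    <[U1..Un],a> |-> <[V1..Vn], h([[U1..Un],a])>,
    V_j = { h([[U1..Uj],b]) | b in U_j } *)
Definition lift_list (k : nat) (G G' : hgraph) (h : hV (Hk k G) -> hV G')
  (p : list (hV G -> Prop)) : list (hV G' -> Prop) :=
  map (fun j => fun y : hV G' =>
         exists b (Hb : valid_play G k (firstn (S j) p, b)),
           nth j p (dE G) b /\ y = h (mkv G k _ Hb))
      (seq 0 (length p)).

Definition lift (k : nat) (G G' : hgraph) (h : hV (Hk k G) -> hV G')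
  (x : play G) (Hx : valid_play G k x) : play G' :=
  (lift_list k G G' h (fst x), h (mkv G k x Hx)).

(* hs is the coextension h^* : for every focussed k-play <p,a>,
   h^*([p,a]) = [lift of <p,a>]  (this also expresses well-definedness) *)
Definition coext_spec (k : nat) (G G' : hgraph) (h : hV (Hk k G) -> hV G')
  (hs : hV (Hk k G) -> hV (Hk k G')) : Prop :=
  forall (x : play G) (Hx : valid_play G k x),
    proj1_sig (hs (mkv G k x Hx)) = cls G' k (lift k G G' h x Hx).

(* The counit maps the hyperedge [edge_at p] of H_k G onto the last hyperedge of
   p, and a coextension h^* maps it onto the hyperedge at the lifted list
   [V_1; ...; V_n], each V_j being the h-image of the hyperedge at a prefix of p.
   These two image identities show that ε and h^* are morphisms and, applied
   entrywise to lifted lists, give the three comonad laws.  Hyperedges of H_k G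
   have at most k elements by construction. *)

From Stdlib Require Import List Arith Lia ClassicalEpsilon Classical.
From Stdlib Require Import ProofIrrelevance FunctionalExtensionality PropExtensionality.
Import ListNotations.

Lemma pred_ext {A : Type} (P Q : A -> Prop) : (forall x, P x <-> Q x) -> P = Q.
Proof.
  intro H. apply functional_extensionality; intro x.
  apply propositional_extensionality, H.
Qed.

Lemma last_nth {A : Type} (l : list A) (d : A) : last l d = nth (length l - 1) l d.
Proof.
  induction l as [|a [|b l] IH]; [reflexivity | reflexivity |].
  change (last (b :: l) d = nth (length l) (b :: l) d).
  rewrite IH. simpl. now rewrite Nat.sub_0_r.
Qed.

Lemma last_firstn {A : Type} (l : list A) (j : nat) (d : A) :
  j < length l -> last (firstn (S j) l) d = nth j l d.
Proof.
  intro Hj. rewrite last_nth, length_firstn, nth_firstn.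
  replace (Nat.min (S j) (length l) - 1) with j by lia.
  now rewrite (proj2 (Nat.ltb_lt j (S j))) by lia.
Qed.

Lemma last_In {A : Type} (l : list A) (d : A) : l <> [] -> In (last l d) l.
Proof.
  intro Hl. rewrite last_nth. apply nth_In.
  destruct l; [congruence | simpl; lia].
Qed.

Lemma In_firstn {A : Type} (l : list A) (n : nat) (x : A) :
  In x (firstn n l) -> In x l.
Proof. intro H. rewrite <- (firstn_skipn n l). apply in_or_app. auto. Qed.

Lemma firstn_eq_le {A : Type} (l1 l2 : list A) (n m : nat) :
  n <= m -> firstn m l1 = firstn m l2 -> firstn n l1 = firstn n l2.
Proof.
  intros Hnm E. replace n with (Nat.min n m) by lia.
  now rewrite <- !firstn_firstn, E.
Qed.

Lemma nth_firstn_eq {A : Type} (l1 l2 : list A) (m j : nat) (d : A) :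
  firstn m l1 = firstn m l2 -> j < m -> nth j l1 d = nth j l2 d.
Proof.
  intros E Hj. apply (f_equal (fun l => nth j l d)) in E.
  rewrite !nth_firstn, (proj2 (Nat.ltb_lt j m) Hj) in E. exact E.
Qed.

Lemma common_prefix_maximal {A : Type} (d : A) (l1 l2 : list A) (m : nat) :
  m <= length l1 -> m <= length l2 -> firstn m l1 = firstn m l2 ->
  exists m', m <= m' /\ m' <= length l1 /\ m' <= length l2 /\
    firstn m' l1 = firstn m' l2 /\
    (m' = length l1 \/ m' = length l2 \/ nth m' l1 d <> nth m' l2 d).
Proof.
  revert l2 m. induction l1 as [|a l1 IH]; intros [|b l2] m H1 H2 E; simpl in *.
  - exists 0. intuition lia.
  - exists 0. intuition lia.
  - exists 0. intuition lia.
  - destruct (classic (a = b)) as [<- | ne].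
    + destruct (IH l2 (pred m)) as (m' & Hm & Hm1 & Hm2 & E' & Hmax); try lia.
      { destruct m; [reflexivity | now injection E]. }
      exists (S m'). simpl. rewrite E'. intuition lia.
    + destruct m as [|m]; [| now injection E].
      exists 0. intuition lia.
Qed.

Lemma atmost_finite {V : Type} (n : nat) (U : V -> Prop) :
  atmost n U -> finite_subset U.
Proof. intros (l & _ & Hl). now exists l. Qed.

Lemma atmost_image {A B : Type} (n : nat) (f : A -> B) (U : A -> Prop) :
  atmost n U -> atmost n (image f U).
Proof.
  intros (l & Hlen & Hl). exists (map f l). rewrite length_map. split; [exact Hlen|].
  intro y. rewrite in_map_iff. unfold image.
  split; intros (x & Hx & E); exists x; split; try apply Hl; auto.
Qed.

Lemma atmost_dep_image {A B : Type} (n : nat) (U : A -> Prop)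
  (f : forall a, U a -> B) :
  atmost n U -> atmost n (fun y => exists a (Ha : U a), y = f a Ha).
Proof.
  intros (l & Hlen & Hl).
  enough (Hl' : exists l', length l' <= length l /\
            forall y, (exists a (Ha : U a), In a l /\ y = f a Ha) <-> In y l').
  { destruct Hl' as (l' & Hlen' & Hl'). exists l'. split; [lia|].
    intro y. rewrite <- Hl'. split.
    - intros (a & Ha & E). exists a, Ha. split; [apply Hl, Ha | exact E].
    - intros (a & Ha & _ & E). eauto. }
  clear Hlen Hl. induction l as [|a l (l' & Hlen & IH)].
  - exists []. split; [reflexivity|]. simpl. firstorder.
  - destruct (classic (U a)) as [Ha | Ha]; [exists (f a Ha :: l') | exists l'];
      split; simpl; try lia; intro y; rewrite <- IH; split.
    + intros (a' & Ha' & [<- | Hin] & ->); [left | right; eauto].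
      f_equal. apply proof_irrelevance.
    + intros [<- | (a' & Ha' & Hin & ->)]; [exists a, Ha | exists a', Ha']; auto.
    + intros (a' & Ha' & [<- | Hin] & ->); [contradiction | eauto].
    + intros (a' & Ha' & Hin & ->). exists a', Ha'. auto.
Qed.

Lemma image_comp {A B C : Type} (f : A -> B) (g : B -> C) (U : A -> Prop) :
  image (fun x => g (f x)) U = image g (image f U).
Proof.
  apply pred_ext. intro z. split.
  - intros (x & Hx & <-). exists (f x). split; [now exists x | reflexivity].
  - intros (y & (x & Hx & <-) & <-). now exists x.
Qed.

Section Classes.
Variables (G : hgraph) (k : nat).

(* [feq] with an arbitrary common prefix of length [m] in place of the longest
   one: enlarging [m] only weakens the conditions on [a], so both agree. *)
Definition feq_at (m : nat) (x y : play G) : Prop :=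
  let (p, a) := x in let (q, a') := y in
  a = a' /\ 1 <= m /\ m <= length p /\ m <= length q /\
  firstn m p = firstn m q /\
  (forall j, m - 1 <= j < length p -> nth j p (dE G) a) /\
  (forall j, m - 1 <= j < length q -> nth j q (dE G) a).

Lemma feq_iff_feq_at (x y : play G) : feq G x y <-> exists m, feq_at m x y.
Proof.
  destruct x as [p a], y as [q b]. simpl. split.
  - intros [-> [m Hm]]. exists m. intuition.
  - intros [m (-> & H1 & Hp & Hq & E & Ap & Aq)]. split; [reflexivity|].
    destruct (common_prefix_maximal (dE G) p q m Hp Hq E)
      as (m' & Hm & Hp' & Hq' & E' & Hmax).
    exists m'. repeat split; auto; try lia; intros j Hj; [apply Ap | apply Aq]; lia.
Qed.

Lemma feq_refl (x : play G) : valid_play G k x -> feq G x x.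
Proof.
  destruct x as [p a]. intros [[Hne _] Ha]. simpl in Hne, Ha.
  apply feq_iff_feq_at. exists (length p).
  assert (Hlen : length p <> 0) by (destruct p; simpl; congruence).
  repeat split; try lia; intros j Hj;
    replace j with (length p - 1) by lia; now rewrite <- last_nth.
Qed.

Lemma feq_sym (x y : play G) : feq G x y -> feq G y x.
Proof.
  rewrite !feq_iff_feq_at. destruct x as [p a], y as [q b].
  intros [m (<- & Hm)]. exists m. simpl. intuition.
Qed.

Lemma feq_trans (x y z : play G) : feq G x y -> feq G y z -> feq G x z.
Proof.
  rewrite !feq_iff_feq_at. destruct x as [p a], y as [q b], z as [r c].
  intros [m1 (<- & H1 & Hp1 & Hq1 & E1 & Ap & Aq)]
         [m2 (<- & H2 & Hq2 & Hr2 & E2 & Bq & Br)].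
  exists (Nat.min m1 m2). simpl. repeat split; try lia.
  - rewrite (firstn_eq_le p q _ m1) by (auto; lia).
    apply (firstn_eq_le _ _ _ m2); auto; lia.
  - intros j Hj. destruct (le_lt_dec (m1 - 1) j); [apply Ap; lia|].
    rewrite (nth_firstn_eq p q m1) by (auto; lia). apply Bq. lia.
  - intros j Hj. destruct (le_lt_dec (m2 - 1) j); [apply Br; lia|].
    rewrite (nth_firstn_eq r q m2) by (auto; lia). apply Aq. lia.
Qed.

Lemma feq_prefix (p : list (hV G -> Prop)) (a : hV G) (j : nat) :
  j < length p -> (forall i, j <= i < length p -> nth i p (dE G) a) ->
  feq G (p, a) (firstn (S j) p, a).
Proof.
  intros Hj Ha. apply feq_iff_feq_at. exists (S j). unfold feq_at; cbv beta iota.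
  rewrite length_firstn, firstn_firstn, Nat.min_id.
  repeat split; try lia; intros i Hi; [apply Ha; lia|].
  rewrite nth_firstn, (proj2 (Nat.ltb_lt i (S j))) by lia. apply Ha. lia.
Qed.

Lemma valid_list_firstn (p : list (hV G -> Prop)) (j : nat) :
  valid_list G k p -> valid_list G k (firstn (S j) p).
Proof.
  intros [Hne Hp]. split.
  - destruct p as [|U p]; [contradiction | discriminate].
  - intros U HU. apply Hp, (In_firstn p (S j) U HU).
Qed.

Lemma valid_play_firstn (p : list (hV G -> Prop)) (j : nat) (a : hV G) :
  valid_list G k p -> j < length p -> nth j p (dE G) a ->
  valid_play G k (firstn (S j) p, a).
Proof.
  intros Hp Hj Ha. split; [now apply valid_list_firstn|].
  cbn [snd fst]. now rewrite last_firstn.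
Qed.

Lemma cls_eq (x y : play G) : feq G x y -> cls G k x = cls G k y.
Proof.
  intro Hxy. apply pred_ext. intro z. unfold cls.
  split; intros [Hz F]; split; eauto using feq_trans, feq_sym.
Qed.

Lemma cls_inj (x y : play G) :
  valid_play G k y -> cls G k x = cls G k y -> feq G x y.
Proof.
  intros Hy E. assert (Hyy : cls G k y y) by (split; auto using feq_refl).
  rewrite <- E in Hyy. apply Hyy.
Qed.

Lemma Hvert_ext (v w : Hvert G k) : proj1_sig v = proj1_sig w -> v = w.
Proof.
  destruct v as [C HC], w as [D HD]. simpl. intros <-.
  f_equal. apply proof_irrelevance.
Qed.

Lemma mkv_eq (x y : play G) (Hx : valid_play G k x) (Hy : valid_play G k y) :
  feq G x y -> mkv G k x Hx = mkv G k y Hy.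
Proof. intro Hxy. apply Hvert_ext, cls_eq, Hxy. Qed.

Lemma mkv_surj (v : Hvert G k) : exists x Hx, v = mkv G k x Hx.
Proof. destruct v as [C (x & Hx & E)]. exists x, Hx. now apply Hvert_ext. Qed.

Lemma vrepr_spec (v : Hvert G k) :
  valid_play G k (vrepr k G v) /\ proj1_sig v = cls G k (vrepr k G v).
Proof. unfold vrepr. now destruct constructive_indefinite_description. Qed.

Lemma eps_cls (v : Hvert G k) (x : play G) :
  valid_play G k x -> proj1_sig v = cls G k x -> eps k G v = snd x.
Proof.
  intros Hx E. destruct (vrepr_spec v) as [Hr Er].
  rewrite Er in E. apply cls_inj in E; [|exact Hx].
  unfold eps. destruct x, (vrepr k G v). apply E.
Qed.

Lemma eps_mkv (x : play G) (Hx : valid_play G k x) : eps k G (mkv G k x Hx) = snd x.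
Proof. now apply eps_cls. Qed.

Definition edge_at (p : list (hV G -> Prop)) : Hvert G k -> Prop :=
  fun v => exists a, last p (dE G) a /\ proj1_sig v = cls G k (p, a).

Lemma Hedge_edge_at (p : list (hV G -> Prop)) : valid_list G k p -> Hedge G k (edge_at p).
Proof. intro Hp. now exists p. Qed.

Lemma edge_at_mkv (p : list (hV G -> Prop)) (a : hV G) (Hpa : valid_play G k (p, a)) :
  edge_at p (mkv G k (p, a) Hpa).
Proof. exists a. split; [apply Hpa | reflexivity]. Qed.

Lemma edge_at_eq_mkv (p : list (hV G -> Prop)) (Hp : valid_list G k p) :
  edge_at p = fun v => exists a (Ha : last p (dE G) a), v = mkv G k (p, a) (conj Hp Ha).
Proof.
  apply pred_ext. intro v. split.
  - intros (a & Ha & Ev). exists a, Ha. now apply Hvert_ext.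
  - intros (a & Ha & ->). apply edge_at_mkv.
Qed.

Lemma Hedge_atmost (S : Hvert G k -> Prop) : Hedge G k S -> atmost k S.
Proof.
  intros (p & Hp & ->). change (atmost k (edge_at p)). rewrite (edge_at_eq_mkv p Hp).
  apply atmost_dep_image. destruct Hp as [Hne Hp].
  apply Hp, last_In, Hne.
Qed.

Lemma Hk_finite_edges : finite_edges (Hk k G).
Proof. intros S HS. exact (atmost_finite k S (Hedge_atmost S HS)). Qed.

Lemma image_eps_edge_at (p : list (hV G -> Prop)) :
  valid_list G k p -> image (eps k G) (edge_at p) = last p (dE G).
Proof.
  intro Hp. apply pred_ext. intro y. split.
  - intros (v & (a & Ha & Ev) & <-). now rewrite (eps_cls v (p, a)).
  - intro Hy. exists (mkv G k (p, y) (conj Hp Hy)).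
    split; [apply edge_at_mkv | apply eps_mkv].
Qed.

Lemma eps_is_hom : is_hom (Hk k G) G (eps k G).
Proof.
  intros S (p & Hp & ->). change (hE G (image (eps k G) (edge_at p))).
  rewrite image_eps_edge_at by exact Hp.
  destruct Hp as [Hne Hp]. apply Hp, last_In, Hne.
Qed.

End Classes.

Section Lift.
Variables (k : nat) (G G' : hgraph) (h : hV (Hk k G) -> hV G').

Definition lift_edge (q : list (hV G -> Prop)) : hV G' -> Prop :=
  fun y => exists b (Hb : valid_play G k (q, b)), y = h (mkv G k (q, b) Hb).

Lemma length_lift_list (p : list (hV G -> Prop)) : length (lift_list k G G' h p) = length p.
Proof. unfold lift_list. now rewrite length_map, length_seq. Qed.

Lemma nth_lift_list (p : list (hV G -> Prop)) (j : nat) :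
  j < length p -> nth j (lift_list k G G' h p) (dE G') = lift_edge (firstn (S j) p).
Proof.
  intro Hj. unfold lift_list.
  erewrite nth_indep, (map_nth _ _ 0), seq_nth by (rewrite ?length_map, ?length_seq; lia).
  apply pred_ext. intro y. split.
  - intros (b & Hb & _ & E). now exists b, Hb.
  - intros (b & Hb & E). exists b, Hb. split; [|exact E].
    rewrite <- last_firstn by exact Hj. apply Hb.
Qed.

Lemma firstn_lift_list (p : list (hV G -> Prop)) (n : nat) :
  firstn n (lift_list k G G' h p) = lift_list k G G' h (firstn n p).
Proof.
  apply nth_ext with (dE G') (dE G').
  { now rewrite length_firstn, !length_lift_list, length_firstn. }
  intros i Hi. rewrite length_firstn, length_lift_list in Hi.
  rewrite nth_firstn, (proj2 (Nat.ltb_lt i n)) by lia.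
  rewrite !nth_lift_list by (rewrite ?length_firstn; lia).
  rewrite firstn_firstn. do 2 f_equal. lia.
Qed.

Lemma last_lift_list (p : list (hV G -> Prop)) :
  p <> [] -> last (lift_list k G G' h p) (dE G') = lift_edge p.
Proof.
  intro Hne. assert (Hlen : length p <> 0) by (destruct p; simpl; congruence).
  rewrite last_nth, length_lift_list, nth_lift_list by lia.
  now replace (S (length p - 1)) with (length p) by lia; rewrite firstn_all.
Qed.

Lemma lift_edge_image (q : list (hV G -> Prop)) :
  valid_list G k q -> lift_edge q = image h (edge_at G k q).
Proof.
  intro Hq. rewrite (edge_at_eq_mkv G k q Hq). apply pred_ext. intro y. split.
  - intros (b & Hb & ->). exists (mkv G k (q, b) Hb). split; [|reflexivity].
    exists b, (proj2 Hb). f_equal. apply proof_irrelevance.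
  - intros (v & (b & Hb & ->) & <-). now exists b, (conj Hq Hb).
Qed.

Lemma lift_edge_prefix (p : list (hV G -> Prop)) (a : hV G) (Hpa : valid_play G k (p, a))
  (j : nat) : j < length p -> (forall i, j <= i < length p -> nth i p (dE G) a) ->
  lift_edge (firstn (S j) p) (h (mkv G k (p, a) Hpa)).
Proof.
  intros Hj Ha.
  assert (Hb : valid_play G k (firstn (S j) p, a))
    by (apply valid_play_firstn; [apply Hpa | exact Hj | apply Ha; lia]).
  exists a, Hb. f_equal. now apply mkv_eq, feq_prefix.
Qed.

Hypothesis h_hom : is_hom (Hk k G) G' h.

Lemma valid_lift_list (p : list (hV G -> Prop)) :
  valid_list G k p -> valid_list G' k (lift_list k G G' h p).
Proof.
  intros Hp. split.
  - intro E. apply (f_equal (@length _)) in E. rewrite length_lift_list in E.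
    destruct Hp as [Hne _]. destruct p; [contradiction | discriminate].
  - intros U HU. destruct (In_nth _ _ (dE G') HU) as (j & Hj & <-).
    rewrite length_lift_list in Hj. rewrite nth_lift_list by exact Hj.
    assert (Hq : valid_list G k (firstn (S j) p)) by now apply valid_list_firstn.
    rewrite lift_edge_image by exact Hq. split.
    + apply h_hom, Hedge_edge_at, Hq.
    + apply atmost_image, Hedge_atmost, Hedge_edge_at, Hq.
Qed.

Lemma valid_lift (x : play G) (Hx : valid_play G k x) :
  valid_play G' k (lift k G G' h x Hx).
Proof.
  destruct x as [p a]. split; [apply valid_lift_list, Hx|].
  unfold lift; cbn [fst snd]. rewrite last_lift_list by apply Hx.
  now exists a, Hx.
Qed.

Lemma lift_feq (x y : play G) (Hx : valid_play G k x) (Hy : valid_play G k y) :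
  feq G x y -> feq G' (lift k G G' h x Hx) (lift k G G' h y Hy).
Proof.
  intro Hxy. assert (Eh : h (mkv G k x Hx) = h (mkv G k y Hy)) by (f_equal; now apply mkv_eq).
  apply feq_iff_feq_at in Hxy. destruct x as [p a], y as [q b].
  destruct Hxy as [m (<- & Hm & Hp & Hq & E & Ap & Aq)].
  apply feq_iff_feq_at. exists m. unfold lift, feq_at; cbv beta iota; cbn [fst snd].
  rewrite !length_lift_list, !firstn_lift_list, E.
  split; [exact Eh|]. repeat split; try lia.
  - intros j Hj. rewrite nth_lift_list by lia.
    apply lift_edge_prefix; [lia|]. intros i Hi. apply Ap. lia.
  - intros j Hj. rewrite nth_lift_list, Eh by lia.
    apply lift_edge_prefix; [lia|]. intros i Hi. apply Aq. lia.
Qed.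

Lemma coext_exists : exists hs, coext_spec k G G' h hs.
Proof.
  exists (fun v => mkv G' k (lift k G G' h (vrepr k G v) (proj1 (vrepr_spec G k v)))
                    (valid_lift _ _)).
  intros x Hx. apply (cls_eq G' k), lift_feq.
  destruct (vrepr_spec G k (mkv G k x Hx)) as [Hr Er].
  apply (cls_inj G k); [exact Hx | symmetry; exact Er].
Qed.

Section Coextension.
Variables (hs : hV (Hk k G) -> hV (Hk k G')) (hs_spec : coext_spec k G G' h hs).

Lemma coext_mkv (x : play G) (Hx : valid_play G k x) :
  hs (mkv G k x Hx) = mkv G' k (lift k G G' h x Hx) (valid_lift x Hx).
Proof. apply Hvert_ext, hs_spec. Qed.

Lemma image_coext_edge_at (q : list (hV G -> Prop)) :
  valid_list G k q -> image hs (edge_at G k q) = edge_at G' k (lift_list k G G' h q).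
Proof.
  intro Hq. rewrite (edge_at_eq_mkv G k q Hq). apply pred_ext. intro w. split.
  - intros (v & (a & Ha & ->) & <-). rewrite coext_mkv.
    apply (edge_at_mkv G' k _ _ (valid_lift (q, a) (conj Hq Ha))).
  - intros (b & Hb & Ew). rewrite last_lift_list in Hb by apply Hq.
    destruct Hb as (a & Ha & ->).
    exists (mkv G k (q, a) Ha). split.
    + exists a, (proj2 Ha). now apply Hvert_ext.
    + apply Hvert_ext. now rewrite hs_spec, Ew.
Qed.

Lemma coext_is_hom : is_hom (Hk k G) (Hk k G') hs.
Proof.
  intros S (q & Hq & ->). change (Hedge G' k (image hs (edge_at G k q))).
  rewrite image_coext_edge_at by exact Hq.
  apply Hedge_edge_at, valid_lift_list, Hq.
Qed.

End Coextension.
End Lift.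

Lemma lift_list_eps (k : nat) (G : hgraph) (p : list (hV G -> Prop)) :
  valid_list G k p -> lift_list k G G (eps k G) p = p.
Proof.
  intro Hp. apply nth_ext with (dE G) (dE G); [apply length_lift_list|].
  intros j Hj. rewrite length_lift_list in Hj.
  rewrite nth_lift_list, lift_edge_image, image_eps_edge_at by
    (try apply valid_list_firstn; assumption).
  now apply last_firstn.
Qed.

Lemma coext_eps_id (k : nat) (G : hgraph) (es : hV (Hk k G) -> hV (Hk k G)) :
  coext_spec k G G (eps k G) es -> forall v, es v = v.
Proof.
  intros es_spec v. destruct (mkv_surj G k v) as ([p a] & Hx & ->).
  apply Hvert_ext. rewrite es_spec. unfold lift; cbn [fst].
  now rewrite lift_list_eps, eps_mkv by apply Hx.
Qed.

Lemma eps_coext (k : nat) (G G' : hgraph) (h : hV (Hk k G) -> hV G')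
  (hs : hV (Hk k G) -> hV (Hk k G')) (h_hom : is_hom (Hk k G) G' h) :
  coext_spec k G G' h hs -> forall v, eps k G' (hs v) = h v.
Proof.
  intros hs_spec v. destruct (mkv_surj G k v) as (x & Hx & ->).
  now rewrite (coext_mkv k G G' h h_hom hs hs_spec), eps_mkv.
Qed.

Lemma lift_list_comp (k : nat) (G G' G'' : hgraph) (h : hV (Hk k G) -> hV G')
  (g : hV (Hk k G') -> hV G'') (hs : hV (Hk k G) -> hV (Hk k G'))
  (h_hom : is_hom (Hk k G) G' h) (hs_spec : coext_spec k G G' h hs)
  (p : list (hV G -> Prop)) : valid_list G k p ->
  lift_list k G G'' (fun v => g (hs v)) p = lift_list k G' G'' g (lift_list k G G' h p).
Proof.
  intro Hp. apply nth_ext with (dE G'') (dE G''); [now rewrite !length_lift_list|].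
  intros j Hj. rewrite length_lift_list in Hj.
  assert (Hq : valid_list G k (firstn (S j) p)) by now apply valid_list_firstn.
  rewrite nth_lift_list, nth_lift_list, firstn_lift_list by
    (rewrite ?length_lift_list; exact Hj).
  rewrite !lift_edge_image by (try apply valid_lift_list; assumption).
  now rewrite image_comp, (image_coext_edge_at k G G' h h_hom hs hs_spec).
Qed.

Lemma coext_comp (k : nat) (G G' G'' : hgraph) (h : hV (Hk k G) -> hV G')
  (g : hV (Hk k G') -> hV G'') (hs : hV (Hk k G) -> hV (Hk k G'))
  (gs : hV (Hk k G') -> hV (Hk k G'')) (ghs : hV (Hk k G) -> hV (Hk k G''))
  (h_hom : is_hom (Hk k G) G' h) :
  coext_spec k G G' h hs -> coext_spec k G' G'' g gs ->
  coext_spec k G G'' (fun v => g (hs v)) ghs -> forall v, ghs v = gs (hs v).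
Proof.
  intros hs_spec gs_spec ghs_spec v. destruct (mkv_surj G k v) as ([p a] & Hx & ->).
  apply Hvert_ext.
  rewrite ghs_spec, (coext_mkv k G G' h h_hom hs hs_spec), gs_spec.
  unfold lift; cbn [fst].
  rewrite (lift_list_comp k G G' G'' h g hs h_hom hs_spec) by apply Hx.
  now rewrite (coext_mkv k G G' h h_hom hs hs_spec).
Qed.

Theorem theorem6p2 (k : nat) (hk : 0 < k) :
  (* H_k(G) is an object of HGraph *)
  (forall G : hgraph, finite_edges G -> finite_edges (Hk k G)) /\
  (* the counit is a morphism *)
  (forall G : hgraph, finite_edges G -> is_hom (Hk k G) G (eps k G)) /\
  (* the coextension h^* is well defined and a morphism *)
  (forall (G G' : hgraph) (h : hV (Hk k G) -> hV G'),
      finite_edges G -> finite_edges G' -> is_hom (Hk k G) G' h ->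
      exists hs : hV (Hk k G) -> hV (Hk k G'),
        coext_spec k G G' h hs /\ is_hom (Hk k G) (Hk k G') hs) /\
  (* law 1: eps^* = id *)
  (forall (G : hgraph) (es : hV (Hk k G) -> hV (Hk k G)),
      finite_edges G -> coext_spec k G G (eps k G) es -> forall v, es v = v) /\
  (* law 2: eps o h^* = h *)
  (forall (G G' : hgraph) (h : hV (Hk k G) -> hV G')
          (hs : hV (Hk k G) -> hV (Hk k G')),
      finite_edges G -> finite_edges G' -> is_hom (Hk k G) G' h ->
      coext_spec k G G' h hs -> forall v, eps k G' (hs v) = h v) /\
  (* law 3: (g o h^* )^* = g^* o h^* *)
  (forall (G G' G'' : hgraph) (h : hV (Hk k G) -> hV G')
          (g : hV (Hk k G') -> hV G'')
          (hs : hV (Hk k G) -> hV (Hk k G'))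
          (gs : hV (Hk k G') -> hV (Hk k G''))
          (ghs : hV (Hk k G) -> hV (Hk k G'')),
      finite_edges G -> finite_edges G' -> finite_edges G'' ->
      is_hom (Hk k G) G' h -> is_hom (Hk k G') G'' g ->
      coext_spec k G G' h hs -> coext_spec k G' G'' g gs ->
      coext_spec k G G'' (fun v => g (hs v)) ghs ->
      forall v, ghs v = gs (hs v)).
Proof.
  repeat split.
  - intros G _. apply Hk_finite_edges.
  - intros G _. apply eps_is_hom.
  - intros G G' h _ _ h_hom.
    destruct (coext_exists k G G' h h_hom) as [hs hs_spec].
    exists hs. split; [exact hs_spec | exact (coext_is_hom k G G' h h_hom hs hs_spec)].
  - intros G es _. apply coext_eps_id.
  - intros G G' h hs _ _. apply eps_coext.
  - intros G G' G'' h g hs gs ghs _ _ _ h_hom _. now apply coext_comp.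
Qed.
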